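(* Let $n\in\mathbb N$ and let $\hat A\in\mathcal A^n$ with $\langle n|\hat A|n\rangle\neq0$. Then there exists $t_0>0$ such that $\mathcal V^{\mathrm{norm}}_t[\hat A]\in\mathcal D^n$ for all $t\ge t_0$.
   Context: Let $\mathcal H=L^2(\mathbb R)$ with annihilation operator $\hat a$, $\hat n=\hat a^\dagger\hat a$ and Fock basis $\{|k\rangle\}$. A quasi-state is a Hermitian trace-class operator of unit trace; a state is a positive semi-definite quasi-state. With $\hat P_n=\sum_{k=0}^n|k\rangle\langle k|$, $\mathcal A^n$ is the set of quasi-states $\hat A$ with $\hat P_n\hat A\hat P_n=\hat A$, and $\mathcal D^n$ the set of states in $\mathcal A^n$. For $t>0$ and such $\hat A$, the Vertigo map is $\mathcal V_t[\hat A]=\sum_{k\ge0}\frac{(t-1)^k}{k!}t^{\hat n/2}\hat a^k\hat A\hat a^{\dagger k}t^{\hat n/2}$ (finite sum), equivalently characterized on Wigner functions $W_{\hat A}(\alpha)=\frac2\pi\mathrm{Tr}[\hat A\hat D(\alpha)(-1)^{\hat n}\hat D(\alpha)^\dagger]$ (with $\hat D(\alpha)=\exp(\alpha\hat a^\dagger-\alpha^*\hat a)$) by $W_{\mathcal V_t[\hat A]}(\alpha)=W_{\hat A}(\sqrt t\alpha)e^{2(t-1)|\alpha|^2}$; and $\mathcal V^{\mathrm{norm}}_t[\hat A]=\mathcal V_t[\hat A]/\mathrm{Tr}\,\mathcal V_t[\hat A]$ whenever this trace is non-zero. *)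

From HB Require Import structures.
From mathcomp Require Import all_boot all_order all_algebra.
From mathcomp Require Import reals.
From mathcomp Require Import complex.
Set Implicit Arguments. Unset Strict Implicit. Unset Printing Implicit Defensive.
Import Order.TTheory GRing.Theory Num.Theory.
Local Open Scope ring_scope.
Local Open Scope complex_scope.

(* Operators B with P_n B P_n = B are identified with their matrix
   (<i|B|j>)_{0<=i,j<=n} in the Fock basis |0>,...,|n>. *)

Definition adjmx (R : rcfType) (m p : nat) (M : 'M[R[i]]_(m, p)) : 'M[R[i]]_(p, m) :=
  \matrix_(i, j) (M j i)^*.

(* truncated annihilation operator: a|j> = sqrt j |j-1>, i.e. <i|a|j> = sqrt j [j = i+1] *)
Definition ann (R : rcfType) (n : nat) : 'M[R[i]]_n.+1 :=
  \matrix_(i, j) (if (j : nat) == i.+1 then (Num.sqrt (j%:R : R))%:C else 0).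

(* t^(n^/2) restricted to span{|0>,...,|n>}: <i|t^(n^/2)|j> = t^(i/2) [i = j] *)
Definition tpow (R : rcfType) (n : nat) (t : R) : 'M[R[i]]_n.+1 :=
  \matrix_(i, j) (if i == j then (Num.sqrt t ^+ i)%:C else 0).

(* Vertigo map; the terms with k > n vanish since a^(n+1) P_n = 0. *)
Definition vertigo (R : rcfType) (n : nat) (t : R) (A : 'M[R[i]]_n.+1) : 'M[R[i]]_n.+1 :=
  \sum_(k < n.+1)
    (((t - 1) ^+ k / (k`!)%:R)%:C *:
      (tpow n t *m (ann R n ^+ k) *m A *m adjmx (ann R n ^+ k) *m tpow n t)).

Definition vertigo_norm (R : rcfType) (n : nat) (t : R) (A : 'M[R[i]]_n.+1) : 'M[R[i]]_n.+1 :=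
  (\tr (vertigo t A))^-1 *: vertigo t A.

Definition hermitian (R : rcfType) (n : nat) (M : 'M[R[i]]_n.+1) : Prop :=
  adjmx M = M.

(* A^n : Hermitian, unit trace *)
Definition quasi_state_n (R : rcfType) (n : nat) (M : 'M[R[i]]_n.+1) : Prop :=
  hermitian M /\ \tr M = 1.

Definition psd (R : rcfType) (n : nat) (M : 'M[R[i]]_n.+1) : Prop :=
  forall v : 'cV[R[i]]_n.+1, 0 <= (adjmx v *m M *m v) 0 0.

(* D^n : positive semi-definite elements of A^n *)
Definition state_n (R : rcfType) (n : nat) (M : 'M[R[i]]_n.+1) : Prop :=
  quasi_state_n M /\ psd M.

From Pilot Require Import Defs.
From HB Require Import structures.
From mathcomp Require Import all_boot all_order all_algebra.
From mathcomp Require Import reals.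
From mathcomp Require Import complex.
From mathcomp Require Import ring lra zify.
Set Implicit Arguments. Unset Strict Implicit. Unset Printing Implicit Defensive.
Import Order.TTheory GRing.Theory Num.Theory.
Local Open Scope complex_scope.
Local Open Scope ring_scope.

(* Write s = sqrt t. The (i, j) entry of V_t[A] is
   sum_k (t - 1)^k / k! * s^(i + j) * <i|a^k A a^+k|j>, and <i|a^k A a^+k|j>
   vanishes unless i + k <= n and j + k <= n. Hence every term is
   O(s^(2n - 1)), except the diagonal term with k = n - i, which equals
   (t - 1)^(n - i) / (n - i)! * t^i * |<i|a^(n-i)|n>|^2 * <n|A|n> and has exact
   order t^n. Once A is rescaled so that <n|A|n> = 1, V_t[A] is strictly
   diagonally dominant with positive diagonal for large t, hence positive
   semi-definite (a Hermitian diagonally dominant matrix is) with positive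
   trace. Rescaling A by the real number <n|A|n> does not change the
   normalised map. *)

Lemma norm_mul2_le_sqr (T : numDomainType) (x y : T) :
  `|x| * `|y| *+ 2 <= `|x| ^+ 2 + `|y| ^+ 2.
Proof.
have : 0 <= (`|x| - `|y|) ^+ 2 by rewrite real_exprn_even_ge0 // rpredB ?normr_real.
by rewrite sqrrB addrAC subr_ge0.
Qed.

Lemma sum_offdiag_swap (I : finType) (V : nmodType) (F : I -> I -> V) :
  \sum_i \sum_(j | j != i) F i j = \sum_i \sum_(j | j != i) F j i.
Proof.
under [RHS]eq_bigr do rewrite big_mkcond.
rewrite exchange_big; apply: eq_bigr => i _; rewrite big_mkcond.
by apply: eq_bigr => j _; rewrite eq_sym.
Qed.

Section Adjoint.
Variable R : rcfType.
Local Notation C := R[i].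
Local Notation normc := (@Normc.normc R).

Lemma adjmxE m p (M : 'M[C]_(m, p)) i j : adjmx M i j = (M j i)^*.
Proof. by rewrite mxE. Qed.

Lemma adjmxK m p (M : 'M[C]_(m, p)) : adjmx (adjmx M) = M.
Proof. by apply/matrixP=> i j; rewrite !adjmxE conjCK. Qed.

Lemma adjmxM m p q (M : 'M[C]_(m, p)) (N : 'M[C]_(p, q)) :
  adjmx (M *m N) = adjmx N *m adjmx M.
Proof.
apply/matrixP=> i j; rewrite !mxE rmorph_sum; apply: eq_bigr => k _.
by rewrite !adjmxE rmorphM mulrC.
Qed.

Lemma adjmxZ m p (c : C) (M : 'M[C]_(m, p)) : adjmx (c *: M) = c^* *: adjmx M.
Proof. by apply/matrixP=> i j; rewrite !mxE rmorphM. Qed.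

Lemma adjmx_sum m p (I : finType) (F : I -> 'M[C]_(m, p)) :
  adjmx (\sum_i F i) = \sum_i adjmx (F i).
Proof.
apply/matrixP=> i j; rewrite adjmxE !summxE rmorph_sum.
by apply: eq_bigr => k _; rewrite adjmxE.
Qed.

Lemma conj_realc (x : R) : (x%:C)^* = x%:C.
Proof. exact: conjc_real. Qed.

Lemma realc_normc (x : C) : (normc x)%:C = `|x|.
Proof. by []. Qed.

Lemma normc_ge0 (x : C) : 0 <= normc x.
Proof. by rewrite -ler0c realc_normc. Qed.

Lemma hermitian_diag_real n (M : 'M[C]_n.+1) (i : 'I_n.+1) :
  adjmx M = M -> M i i \is Num.real.
Proof. by move=> HM; apply/CrealP; rewrite -adjmxE HM. Qed.

End Adjoint.

Section DiagonalDominance.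
Variables (R : rcfType) (n : nat).
Local Notation C := R[i].
Implicit Types (M : 'M[C]_n.+1) (v : 'cV[C]_n.+1).

Lemma quad_formE M v :
  (adjmx v *m M *m v) 0 0 = \sum_i \sum_j (v i 0)^* * M i j * v j 0.
Proof.
rewrite mxE exchange_big; apply: eq_bigr => j _; rewrite mxE mulr_suml.
by apply: eq_bigr => i _; rewrite adjmxE.
Qed.

Lemma hermitian_quad_real M v :
  adjmx M = M -> (adjmx v *m M *m v) 0 0 \is Num.real.
Proof.
move=> HM; apply/CrealP; rewrite -adjmxE !adjmxM adjmxK HM.
by rewrite mulmxA.
Qed.

Lemma offdiag_quad_le M v : adjmx M = M ->
  `|\sum_i \sum_(j | j != i) (v i 0)^* * M i j * v j 0|
    <= \sum_i (\sum_(j | j != i) `|M i j|) * `|v i 0| ^+ 2.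
Proof.
move=> HM.
have normM i j : `|M j i| = `|M i j| by rewrite -{1}HM adjmxE norm_conjC.
set S := \sum_i \sum_(j | j != i) `|M i j| * `|v i 0| ^+ 2.
have -> : \sum_i (\sum_(j | j != i) `|M i j|) * `|v i 0| ^+ 2 = S.
  by apply: eq_bigr => i _; rewrite mulr_suml.
set P := \sum_i \sum_(j | j != i) `|M i j| * (`|v i 0| * `|v j 0|).
have triangle : `|\sum_i \sum_(j | j != i) (v i 0)^* * M i j * v j 0| <= P.
  apply: le_trans (ler_norm_sum _ _ _) _; apply: ler_sum => i _.
  apply: le_trans (ler_norm_sum _ _ _) _; apply: ler_sum => j _.
  by rewrite !normrM norm_conjC mulrCA mulrA.
have swap : \sum_i \sum_(j | j != i) `|M i j| * `|v j 0| ^+ 2 = S.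
  rewrite sum_offdiag_swap; apply: eq_bigr => i _.
  by apply: eq_bigr => j _; rewrite normM.
have amgm : P *+ 2 <= S + S.
  rewrite -[X in _ <= _ + X]swap -big_split -sumrMnl; apply: ler_sum => i _.
  rewrite -big_split -sumrMnl; apply: ler_sum => j _.
  by rewrite /= -mulrDr -mulrnAr ler_wpM2l ?norm_mul2_le_sqr.
rewrite -(ler_pMn2r (_ : 0 < 2)%N) // mulr2n.
exact: le_trans (ler_wMn2r 2 triangle) amgm.
Qed.

Lemma diag_dominant_psd M : adjmx M = M ->
  (forall i, \sum_(j | j != i) `|M i j| <= M i i) -> psd M.
Proof.
move=> HM dom v; have form_real := hermitian_quad_real v HM.
rewrite quad_formE in form_real *.
set O := \sum_i \sum_(j | j != i) (v i 0)^* * M i j * v j 0 in form_real *.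
set Dg := \sum_i M i i * `|v i 0| ^+ 2.
set D := \sum_i (\sum_(j | j != i) `|M i j|) * `|v i 0| ^+ 2.
have split_diag : \sum_i \sum_j (v i 0)^* * M i j * v j 0 = Dg + O.
  rewrite -big_split; apply: eq_bigr => i _.
  by rewrite (bigD1 i) //= normCK; congr (_ + _); ring.
have D_ge0 : 0 <= D.
  by apply: sumr_ge0 => i _; rewrite mulr_ge0 ?exprn_ge0 ?sumr_ge0.
have D_le : D <= Dg by apply: ler_sum => i _; rewrite ler_wpM2r ?exprn_ge0.
have O_real : O \is Num.real.
  have -> : O = \sum_i \sum_j (v i 0)^* * M i j * v j 0 - Dg.
    by rewrite split_diag addrC addKr.
  by rewrite rpredB // ger0_real // (le_trans D_ge0).
have := offdiag_quad_le v HM; rewrite real_ler_norml // => /andP[O_lb _].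
by rewrite split_diag -lerBlDl sub0r (le_trans _ O_lb) // lerN2.
Qed.

Lemma diag_dominant_trace_gt0 M :
  (forall i, \sum_(j | j != i) `|M i j| < M i i) -> 0 < \tr M.
Proof.
move=> dom; have diag_gt0 i : 0 < M i i by apply: le_lt_trans (dom i); rewrite sumr_ge0.
rewrite /mxtrace (bigD1 ord0) //= ltr_pwDl ?diag_gt0 ?sumr_ge0 // => i _.
by rewrite ltW.
Qed.

End DiagonalDominance.

Section Vertigo.
Variables (R : rcfType) (n : nat).
Local Notation C := R[i].
Local Notation a := (ann R n).
Implicit Types (A : 'M[C]_n.+1) (t : R).

Definition ann_sandwich A (k : nat) : 'M[C]_n.+1 := a ^+ k *m A *m adjmx (a ^+ k).

Definition vertigo_coef t (k : nat) : R := (t - 1) ^+ k / k`!%:R.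

Lemma annX_eq0 k (i l : 'I_n.+1) : (l : nat) != (i + k)%N -> (a ^+ k) i l = 0.
Proof.
elim: k i l => [|k IH] i l.
  by rewrite addn0 expr0 mxE => l_ne; rewrite -val_eqE eq_sym (negPf l_ne).
rewrite exprS -mulmxE mxE => l_ne; apply: big1 => m _.
rewrite mxE; case: eqP => [m_eq|_]; last by rewrite mul0r.
by rewrite IH ?mulr0 // m_eq addSnnS.
Qed.

Lemma annX_neq0 k (i l : 'I_n.+1) : (l : nat) = (i + k)%N -> (a ^+ k) i l != 0.
Proof.
elim: k i l => [|k IH] i l.
  by rewrite addn0 expr0 mxE => /val_inj ->; rewrite eqxx oner_eq0.
move=> l_eq; have lt_i1 : (i.+1 < n.+1)%N by have := ltn_ord l; rewrite l_eq; lia.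
rewrite exprS -mulmxE mxE (bigD1 (Ordinal lt_i1)) //= big1 ?addr0.
  rewrite mulf_neq0 ?IH ?l_eq ?addSnnS // mxE eqxx /=.
  by rewrite fmorph_eq0 sqrtr_eq0 -ltNge ltr0Sn.
move=> m m_ne; rewrite mxE; case: eqP => [m_eq|_]; last by rewrite mul0r.
by case/eqP: m_ne; apply: val_inj.
Qed.

Lemma ann_sandwich_eq0 A k (i j : 'I_n.+1) :
  (n < i + k)%N || (n < j + k)%N -> ann_sandwich A k i j = 0.
Proof.
move=> out; rewrite mxE; apply: big1 => l _; case/orP: out => out.
  rewrite mxE big1 ?mul0r // => l' _; rewrite annX_eq0 ?mul0r //.
  by apply/eqP => l'_eq; have := ltn_ord l'; rewrite l'_eq; lia.
rewrite adjmxE annX_eq0 ?rmorph0 ?mulr0 //.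
by apply/eqP => l_eq; have := ltn_ord l; rewrite l_eq; lia.
Qed.

Lemma ann_sandwich_top A (i : 'I_n.+1) :
  ann_sandwich A (n - i) i i = `|(a ^+ (n - i)) i ord_max| ^+ 2 * A ord_max ord_max.
Proof.
have top_only l : l != ord_max -> (a ^+ (n - i)) i l = 0.
  move=> l_ne; apply: annX_eq0; apply: contra l_ne => /eqP l_eq.
  by apply/eqP/val_inj; rewrite /= l_eq; have := ltn_ord i; lia.
rewrite mxE (bigD1 ord_max) //= big1 => [|l /top_only]; last first.
  by rewrite adjmxE => ->; rewrite rmorph0 mulr0.
rewrite mxE (bigD1 ord_max) //= big1 => [|l /top_only ->]; last by rewrite mul0r.
by rewrite !addr0 adjmxE normCK; ring.
Qed.

Lemma tpow_diag t : tpow n t = diag_mx (\row_(i < n.+1) (Num.sqrt t ^+ i)%:C).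
Proof.
by apply/matrixP=> i j; rewrite !mxE; case: eqP => [->|]; rewrite ?mulr1n ?mulr0n.
Qed.

Lemma adjmx_tpow t : adjmx (tpow n t) = tpow n t.
Proof.
apply/matrixP=> i j; rewrite adjmxE !mxE eq_sym.
by case: eqP => [->|_]; rewrite ?conj_realc ?rmorph0.
Qed.

Definition vertigo_term t A (i j k : 'I_n.+1) : C :=
  (vertigo_coef t k * Num.sqrt t ^+ (i + j))%:C * ann_sandwich A k i j.

Lemma vertigoE t A (i j : 'I_n.+1) :
  vertigo t A i j = \sum_(k < n.+1) vertigo_term t A i j k.
Proof.
rewrite summxE; apply: eq_bigr => k _; rewrite /vertigo_term.
rewrite -[tpow n t *m _ *m A]mulmxA -[tpow n t *m _ *m adjmx _]mulmxA.
rewrite -/(ann_sandwich A k) tpow_diag mul_diag_mx mul_mx_diag !mxE.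
by rewrite exprD !rmorphM /vertigo_coef; ring.
Qed.

Lemma vertigo_hermitian t A : adjmx A = A -> adjmx (vertigo t A) = vertigo t A.
Proof.
move=> HA; rewrite /vertigo adjmx_sum; apply: eq_bigr => k _.
by rewrite adjmxZ conj_realc !adjmxM adjmxK HA adjmx_tpow !mulmxA.
Qed.

Lemma vertigoZ t (c : C) A : vertigo t (c *: A) = c *: vertigo t A.
Proof.
rewrite /vertigo scaler_sumr; apply: eq_bigr => k _.
by rewrite -scalemxAr -!scalemxAl !scalerA mulrC.
Qed.

Lemma vertigo_normZ t (c : C) A : c != 0 -> vertigo_norm t (c *: A) = vertigo_norm t A.
Proof.
move=> c_neq0; rewrite /vertigo_norm vertigoZ mxtraceZ scalerA invfM mulrAC.
by rewrite mulVf ?mul1r.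
Qed.

End Vertigo.

Lemma state_of_psd (R : rcfType) n (M : 'M[R[i]]_n.+1) :
  adjmx M = M -> psd M -> 0 < \tr M -> state_n ((\tr M)^-1 *: M).
Proof.
move=> HM psdM trM_gt0; have trV_gt0 : 0 < (\tr M)^-1 by rewrite invr_gt0.
split; first split.
- by rewrite /Defs.hermitian adjmxZ HM geC0_conj ?ltW.
- by rewrite mxtraceZ mulVf ?gt_eqF.
- move=> v; rewrite -scalemxAr -scalemxAl mxE.
  exact: mulr_ge0 (ltW trV_gt0) (psdM v).
Qed.

Section Asymptotics.
Variables (R : rcfType) (n : nat) (B : 'M[R[i]]_n.+1).
Local Notation normc := (@Normc.normc R).
Implicit Types (t : R).

Lemma vertigo_coef_ge0 t k : 1 <= t -> 0 <= vertigo_coef t k.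
Proof. by move=> t_ge1; rewrite divr_ge0 ?exprn_ge0 ?subr_ge0. Qed.

Lemma vertigo_coef_le t k : 1 <= t -> vertigo_coef t k <= t ^+ k.
Proof.
move=> t_ge1; have t_ge0 : 0 <= t by apply: le_trans t_ge1.
rewrite ler_pdivrMr ?ltr0n ?fact_gt0 //; apply: (@le_trans _ _ (t ^+ k)).
  by rewrite lerXn2r ?nnegrE ?subr_ge0 ?gerBl.
by rewrite ler_peMr ?exprn_ge0 // ler1n fact_gt0.
Qed.

Lemma vertigo_coef_sqrt_le t k m p : 1 <= t -> (2 * k + m <= p)%N ->
  vertigo_coef t k * Num.sqrt t ^+ m <= Num.sqrt t ^+ p.
Proof.
move=> t_ge1 le_p; have t_ge0 : 0 <= t by apply: le_trans t_ge1.
have s_ge1 : 1 <= Num.sqrt t by rewrite -sqrtr1 ler_sqrt.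
apply: le_trans (ler_weXn2l s_ge1 le_p); rewrite exprD exprM sqr_sqrtr //.
by rewrite ler_wpM2r ?exprn_ge0 ?sqrtr_ge0 ?vertigo_coef_le.
Qed.

Lemma vertigo_coef_lb t m : 2 <= t -> t ^+ m <= vertigo_coef t m * (2 ^+ m * m`!%:R).
Proof.
move=> t_ge2; have -> : vertigo_coef t m * (2 ^+ m * m`!%:R) = (2 * (t - 1)) ^+ m.
  by rewrite /vertigo_coef exprMn; field; rewrite pnatr_eq0 -lt0n fact_gt0.
by apply: lerXn2r; rewrite ?nnegrE; lra.
Qed.

(* [rev_ord i] has value [n - i]: it indexes the only term of the diagonal
   entry [(i, i)] that reaches order [t ^ n]. *)
Lemma vertigo_term_le t (i j k : 'I_n.+1) : 1 <= t -> (j != i) || (k != rev_ord i) ->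
  (Num.sqrt t)%:C * `|vertigo_term t B i j k| <= (t ^+ n)%:C * `|ann_sandwich B k i j|.
Proof.
move=> t_ge1 off_main; have t_ge0 : 0 <= t by apply: le_trans t_ge1.
rewrite /vertigo_term; have [->|Y_neq0] := eqVneq (ann_sandwich B k i j) 0.
  by rewrite mulr0 normr0 !mulr0.
have /norP[] : ~~ ((n < i + k)%N || (n < j + k)%N).
  by apply: contra Y_neq0 => out; rewrite ann_sandwich_eq0.
rewrite -!leqNgt => le_ik le_jk.
have le_2n : (2 * k + (i + j).+1 <= 2 * n)%N.
  by move: off_main; rewrite -!val_eqE /=; lia.
rewrite normrM ger0_norm; last first.
  by rewrite ler0c mulr_ge0 ?vertigo_coef_ge0 ?exprn_ge0 ?sqrtr_ge0.
rewrite mulrA -rmorphM ler_wpM2r // lecR mulrCA -exprS.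
by rewrite -[X in _ <= X ^+ n](sqr_sqrtr t_ge0) -exprM vertigo_coef_sqrt_le.
Qed.

Definition row_mass (i : 'I_n.+1) : R :=
  \sum_j \sum_(k < n.+1) normc (ann_sandwich B k i j).

Lemma row_mass_ge0 i : 0 <= row_mass i.
Proof.
by apply: sumr_ge0 => j _; apply: sumr_ge0 => k _; apply: normc_ge0.
Qed.

Lemma row_massE i : (row_mass i)%:C = \sum_j \sum_(k < n.+1) `|ann_sandwich B k i j|.
Proof. by rewrite rmorph_sum; apply: eq_bigr => j _; rewrite rmorph_sum. Qed.

Lemma vertigo_offmain_le t (i : 'I_n.+1) : 1 <= t ->
  (Num.sqrt t)%:C * (\sum_(j | j != i) `|vertigo t B i j|
                     + `|\sum_(k | k != rev_ord i) vertigo_term t B i i k|)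
  <= (t ^+ n * row_mass i)%:C.
Proof.
move=> t_ge1; have s_ge0 : 0 <= (Num.sqrt t)%:C by rewrite ler0c sqrtr_ge0.
rewrite rmorphM /= row_massE [X in _ <= _ * X](bigD1 i) //= addrC !mulrDr.
apply: lerD.
  rewrite !mulr_sumr; apply: ler_sum => j j_ne; rewrite vertigoE.
  apply: le_trans (ler_wpM2l s_ge0 (ler_norm_sum _ _ _)) _.
  by rewrite !mulr_sumr; apply: ler_sum => k _; rewrite vertigo_term_le ?j_ne.
apply: le_trans (ler_wpM2l s_ge0 (ler_norm_sum _ _ _)) _.
rewrite !mulr_sumr [X in _ <= X](bigD1 (rev_ord i)) //=.
rewrite ler_wpDl ?mulr_ge0 ?normr_ge0 ?ler0c ?exprn_ge0 ?(le_trans ler01 t_ge1) //.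
by apply: ler_sum => k k_ne; rewrite vertigo_term_le ?k_ne ?orbT.
Qed.

Definition top_weight (i : 'I_n.+1) : R := normc ((ann R n ^+ (n - i)) i ord_max) ^+ 2.

Lemma top_weight_gt0 i : 0 < top_weight i.
Proof.
rewrite -ltcR rmorph0 rmorphXn /= realc_normc exprn_gt0 // normr_gt0 annX_neq0 //=.
by rewrite subnKC // -ltnS.
Qed.

Definition top_term t (i : 'I_n.+1) : R :=
  vertigo_coef t (n - i) * t ^+ i * top_weight i.

Definition row_threshold (i : 'I_n.+1) : R :=
  2 ^+ (n - i) * (n - i)`!%:R * row_mass i / top_weight i.

Lemma row_threshold_ge0 i : 0 <= row_threshold i.
Proof.
rewrite /row_threshold divr_ge0 ?(ltW (top_weight_gt0 i)) //.
by rewrite !mulr_ge0 ?row_mass_ge0 ?exprn_ge0 ?ler0n.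
Qed.

Lemma top_term_dominates t (i : 'I_n.+1) : 2 <= t -> row_threshold i < Num.sqrt t ->
  t ^+ n * row_mass i < Num.sqrt t * top_term t i.
Proof.
move=> t_ge2 thr_lt; have t1_gt0 : 0 < t - 1 by lra.
set c := vertigo_coef t (n - i) * t ^+ i; set L : R := 2 ^+ (n - i) * (n - i)`!%:R.
have c_gt0 : 0 < c.
  by rewrite /c /vertigo_coef !mulr_gt0 ?invr_gt0 ?exprn_gt0 ?ltr0n ?fact_gt0 //; lra.
have tn_le : t ^+ n <= c * L.
  have le_in : (i <= n)%N by rewrite -ltnS.
  rewrite -{1}(subnK le_in) exprD /c mulrAC; apply: ler_wpM2r.
    by rewrite exprn_ge0 //; lra.
  exact: vertigo_coef_lb.
have w_gt0 := top_weight_gt0 i.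
apply: le_lt_trans (_ : _ <= c * L * row_mass i) _.
  by rewrite ler_wpM2r ?row_mass_ge0.
have -> : c * L * row_mass i = top_term t i * row_threshold i.
  by rewrite /top_term /row_threshold -/c -/L; field; rewrite gt_eqF.
by rewrite [X in _ < X]mulrC ltr_pM2l // mulr_gt0.
Qed.

Hypotheses (B_herm : adjmx B = B) (B_top : B ord_max ord_max = 1).

Lemma vertigo_diag_split t (i : 'I_n.+1) : 0 <= t ->
  vertigo t B i i =
  (top_term t i)%:C + \sum_(k | k != rev_ord i) vertigo_term t B i i k.
Proof.
move=> t_ge0; rewrite vertigoE (bigD1 (rev_ord i)) //=; congr (_ + _).
rewrite /vertigo_term /= subSS ann_sandwich_top B_top mulr1 addnn -mul2n exprM.
by rewrite sqr_sqrtr // /top_term !rmorphM rmorphXn.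
Qed.

Lemma vertigo_row_dominant t (i : 'I_n.+1) : 2 <= t -> row_threshold i < Num.sqrt t ->
  \sum_(j | j != i) `|vertigo t B i j| < vertigo t B i i.
Proof.
move=> t_ge2 thr_lt; have t_ge1 : 1 <= t by lra.
set E := \sum_(k | k != rev_ord i) vertigo_term t B i i k.
have V_split : vertigo t B i i = (top_term t i)%:C + E.
  by rewrite vertigo_diag_split //; lra.
have E_real : E \is Num.real.
  have -> : E = vertigo t B i i - (top_term t i)%:C by rewrite V_split addrC addKr.
  rewrite rpredB ?hermitian_diag_real ?vertigo_hermitian //.
  by apply/complex_realP; exists (top_term t i).
have s_gt0 : 0 < (Num.sqrt t)%:C by rewrite ltcR sqrtr_gt0; lra.
have sum_lt : \sum_(j | j != i) `|vertigo t B i j| + `|E| < (top_term t i)%:C.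
  rewrite -(ltr_pM2l s_gt0); apply: le_lt_trans (vertigo_offmain_le i t_ge1) _.
  by rewrite -rmorphM ltcR top_term_dominates.
rewrite V_split; apply: lt_le_trans (_ : (top_term t i)%:C - `|E| <= _).
  by rewrite ltrBrDr.
by rewrite lerD2l real_lerNnormlW.
Qed.

Lemma vertigo_eventually_dominant : exists2 t0 : R, 0 < t0 &
  forall t, t0 <= t -> forall i, \sum_(j | j != i) `|vertigo t B i j| < vertigo t B i i.
Proof.
set s0 := 2 + \sum_i row_threshold i.
have sum_ge0 : 0 <= \sum_i row_threshold i.
  by apply: sumr_ge0 => i _; apply: row_threshold_ge0.
have s0_ge2 : 2 <= s0 by rewrite lerDl.
exists (s0 ^+ 2) => [|t t_ge i]; first by rewrite exprn_gt0 // (lt_le_trans _ s0_ge2).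
have s0_le : s0 <= Num.sqrt t.
  rewrite -(ger0_norm (le_trans _ s0_ge2)) // -sqrtr_sqr ler_sqrt //.
  by apply: le_trans t_ge; rewrite exprn_ge0 // (le_trans _ s0_ge2).
apply: vertigo_row_dominant; first by apply: le_trans t_ge; nra.
apply: lt_le_trans s0_le; rewrite /s0 (bigD1 i) //=.
have : 0 <= \sum_(j | j != i) row_threshold j.
  by apply: sumr_ge0 => j _; apply: row_threshold_ge0.
lra.
Qed.

End Asymptotics.

Theorem lemma5 (R : realType) (n : nat) (A : 'M[R[i]]_n.+1) :
  quasi_state_n A -> A ord_max ord_max != 0 ->
  exists t0 : R, 0 < t0 /\
    forall t : R, t0 <= t ->
      \tr (vertigo t A) != 0 /\ state_n (vertigo_norm t A).
Proof.
move=> [A_herm _] A_top; have HA : adjmx A = A := A_herm.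
set c := A ord_max ord_max in A_top; set B := c^-1 *: A.
have c_real : c^* = c by rewrite -adjmxE HA.
have HB : adjmx B = B by rewrite adjmxZ HA fmorphV /= c_real.
have B_top : B ord_max ord_max = 1 by rewrite mxE mulVf.
have A_eq : A = c *: B by rewrite scalerA divff // scale1r.
have [t0 t0_gt0 dom] := vertigo_eventually_dominant HB B_top.
exists t0; split => // t t_ge; have tr_gt0 := diag_dominant_trace_gt0 (dom t t_ge).
split; first by rewrite {1}A_eq vertigoZ mxtraceZ mulf_neq0 // gt_eqF.
rewrite {1}A_eq vertigo_normZ //; apply: state_of_psd tr_gt0.
  exact: vertigo_hermitian.
by apply: diag_dominant_psd; [exact: vertigo_hermitian | move=> i; rewrite ltW ?dom].
Qed.
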